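(* The variety generated by the quasivariety of Bochvar algebras (equivalently, the variety generated by $\mathbf{WK}^e$) is axiomatised by the following identities, in the type $\langle\wedge,\vee,\neg,J_2,0,1\rangle$: (K1) $x\vee x\approx x$; (K2) $x\vee y\approx y\vee x$; (K3) $x\vee(y\vee z)\approx(x\vee y)\vee z$; (K4) $\neg\neg x\approx x$; (K5) $x\wedge y\approx\neg(\neg x\vee\neg y)$; (K6) $x\wedge(\neg x\vee y)\approx x\wedge y$; (K7) $0\vee x\approx x$; (K8) $1\approx\neg 0$; (K9) $J_2x\vee\neg J_2x\approx 1$; (K10) $x\vee J_2y\approx x\vee J_2(x\vee y)$; (K11) $x\wedge J_2x\approx x$; (K12) $J_2(x\wedge\neg x)\approx 0$.
   Context: $\mathbf{WK}^e$ is the three-element algebra on $\{0,\tfrac12,1\}$ of type $\langle\wedge,\vee,\neg,J_2,0,1\rangle$ (arities $2,2,1,1,0,0$). Its operations are: - $\neg$ swaps $0$ and $1$ and fixes $\tfrac12$; - $\wedge,\vee$ are the Boolean operations on $\{0,1\}$ and return $\tfrac12$ whenever some argument is $\tfrac12$; - $J_2(1)=1$ and $J_2(\tfrac12)=J_2(0)=0$. The quasivariety of Bochvar algebras is $\mathsf{BCA}=ISP(\mathbf{WK}^e)$. *)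

From Stdlib Require Import List.
Import ListNotations.

Inductive term : Type :=
| Var : nat -> term
| Meet : term -> term -> term
| Join : term -> term -> term
| Neg : term -> term
| J2t : term -> term
| Zero : term
| One : term.

Record algebra : Type := Algebra {
  carrier :> Type;
  a_meet : carrier -> carrier -> carrier;
  a_join : carrier -> carrier -> carrier;
  a_neg : carrier -> carrier;
  a_J2 : carrier -> carrier;
  a_zero : carrier;
  a_one : carrier }.

Fixpoint eval (A : algebra) (v : nat -> carrier A) (t : term) : carrier A :=
  match t with
  | Var n => v n
  | Meet s u => a_meet A (eval A v s) (eval A v u)
  | Join s u => a_join A (eval A v s) (eval A v u)
  | Neg s => a_neg A (eval A v s)
  | J2t s => a_J2 A (eval A v s)
  | Zero => a_zero A
  | One => a_one A
  end.

Definition holds (A : algebra) (s t : term) : Prop :=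
  forall v : nat -> carrier A, eval A v s = eval A v t.

Inductive wk : Type := W0 | Whalf | W1.

Definition wk_neg (a : wk) : wk :=
  match a with W0 => W1 | Whalf => Whalf | W1 => W0 end.

Definition wk_join (a b : wk) : wk :=
  match a, b with
  | Whalf, _ | _, Whalf => Whalf
  | W0, W0 => W0
  | _, _ => W1
  end.

Definition wk_meet (a b : wk) : wk :=
  match a, b with
  | Whalf, _ | _, Whalf => Whalf
  | W1, W1 => W1
  | _, _ => W0
  end.

Definition wk_J2 (a : wk) : wk :=
  match a with W1 => W1 | _ => W0 end.

Definition WKe : algebra := Algebra wk wk_meet wk_join wk_neg wk_J2 W0 W1.

Definition vx := Var 0.
Definition vy := Var 1.
Definition vz := Var 2.

Definition K_axioms : list (term * term) := [
  (Join vx vx, vx);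
  (Join vx vy, Join vy vx);
  (Join vx (Join vy vz), Join (Join vx vy) vz);
  (Neg (Neg vx), vx);
  (Meet vx vy, Neg (Join (Neg vx) (Neg vy)));
  (Meet vx (Join (Neg vx) vy), Meet vx vy);
  (Join Zero vx, vx);
  (One, Neg Zero);
  (Join (J2t vx) (Neg (J2t vx)), One);
  (Join vx (J2t vy), Join vx (J2t (Join vx vy)));
  (Meet vx (J2t vx), vx);
  (J2t (Meet vx (Neg vx)), Zero)
].

Definition models_K (A : algebra) : Prop :=
  forall e, In e K_axioms -> holds A (fst e) (snd e).

(* A satisfies every identity valid in WK^e, i.e. A belongs to the variety
   generated by WK^e (Birkhoff: V(K) = Mod(Id(K))). *)
Definition in_variety_WKe (A : algebra) : Prop :=
  forall s t : term, holds WKe s t -> holds A s t.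

(* In a model of (K1)-(K12) the elements b with b ⊔ ¬b = 1 form a Boolean
   algebra containing every J2 x, and every element splits as
   x = J2 x ⊔ (x ⊓ 0).  Pushing this through the term structure, every term t
   evaluates to B ⊔ ((⋁ V) ⊓ 0), where V is the set of variables of t not in
   the scope of J2 and B is a Boolean combination of the literals J2 x and
   J2 ¬x, with J2 x ⊓ J2 ¬x = 0.  Absorbing the definedness condition
   ⋀_{x ∈ V} (J2 x ⊔ J2 ¬x) into B turns B into the Boolean part of J2 t.
   An identity s ≈ t valid in WK^e forces s and t to have the same V
   (evaluate a variable at 1/2) and J2 s, J2 t to have Boolean parts that
   agree under every consistent assignment of the literals; by Shannon
   expansion such Boolean parts are equal in any model, so s and t have the
   same normal form. *)

From Stdlib Require Import List Arith Bool.
Import ListNotations.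

(** * Boolean formulas and literals *)

Section BoolForm.
Variable X : Type.

Inductive bform : Type :=
| BAtom (a : X)
| BTrue
| BFalse
| BNot (f : bform)
| BAnd (f g : bform)
| BOr (f g : bform).

Fixpoint beval (w : X -> bool) (f : bform) : bool :=
  match f with
  | BAtom a => w a
  | BTrue => true
  | BFalse => false
  | BNot f => negb (beval w f)
  | BAnd f g => beval w f && beval w g
  | BOr f g => beval w f || beval w g
  end.

Fixpoint batoms (f : bform) : list X :=
  match f with
  | BAtom a => [a]
  | BTrue | BFalse => []
  | BNot f => batoms f
  | BAnd f g | BOr f g => batoms f ++ batoms g
  end.

Lemma beval_ext w1 w2 f :
  (forall a, In a (batoms f) -> w1 a = w2 a) -> beval w1 f = beval w2 f.
Proof.
  induction f; simpl; intro H; try reflexivity.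
  - apply H; left; reflexivity.
  - rewrite IHf by exact H; reflexivity.
  - rewrite IHf1, IHf2 by (intros; apply H, in_or_app; auto); reflexivity.
  - rewrite IHf1, IHf2 by (intros; apply H, in_or_app; auto); reflexivity.
Qed.

End BoolForm.

Arguments BAtom {X} a.
Arguments BTrue {X}.
Arguments BFalse {X}.
Arguments BNot {X} f.
Arguments BAnd {X} f g.
Arguments BOr {X} f g.
Arguments beval {X} w f.
Arguments batoms {X} f.

(* The literal (x, true) stands for J2 x ("x is 1") and (x, false) for
   J2 (neg x) ("x is 0"); in WK^e both are 0 when x is 1/2. *)
Definition literal : Type := nat * bool.

Definition consistent (w : literal -> bool) : Prop :=
  forall x, w (x, true) && w (x, false) = false.

Definition clash (l : list nat) : bform literal :=
  fold_right (fun x f => BOr (BAnd (BAtom (x, true)) (BAtom (x, false))) f) BFalse l.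

Lemma literal_eq_dec (a b : literal) : {a = b} + {a <> b}.
Proof. decide equality; auto using bool_dec, Nat.eq_dec. Qed.

(* Only the variables of f and g matter, so finitely many clashes suffice. *)
Lemma consistent_equiv_taut f g :
  (forall w, consistent w -> beval w f = beval w g) ->
  forall w, beval w (BOr (BOr (BNot f) g) (clash (map fst (batoms f ++ batoms g)))) = true.
Proof.
  intros Hfg w; set (l := map fst (batoms f ++ batoms g)); simpl.
  destruct (beval w (clash l)) eqn:Hc; [apply orb_true_r|].
  set (w' := fun a : literal => if in_dec Nat.eq_dec (fst a) l then w a else false).
  assert (Hw' : consistent w').
  { intro x; unfold w'; simpl; destruct (in_dec Nat.eq_dec x l) as [Hx | _]; [|reflexivity].
    clear w'; induction l as [|y l IH]; [contradiction|].
    simpl in Hc; apply orb_false_iff in Hc; destruct Hc as [Hy Hl].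
    destruct Hx as [<- | Hx]; [exact Hy | exact (IH Hl Hx)]. }
  assert (Hagree : forall h, incl (batoms h) (batoms f ++ batoms g) -> beval w' h = beval w h).
  { intros h Hh; apply beval_ext; intros a Ha; unfold w'.
    destruct (in_dec Nat.eq_dec (fst a) l) as [_ | Hn]; [reflexivity|].
    exfalso; apply Hn, in_map, Hh, Ha. }
  rewrite <- (Hagree f), <- (Hagree g), (Hfg w' Hw') by auto using incl_appl, incl_appr, incl_refl.
  destruct (beval w' g); reflexivity.
Qed.

(** * The generating algebra WK^e *)

Fixpoint bare_vars (t : term) : list nat :=
  match t with
  | Var n => [n]
  | Meet s u | Join s u => bare_vars s ++ bare_vars u
  | Neg s => bare_vars s
  | J2t _ | Zero | One => []
  end.

Definition defined_form (l : list nat) : bform literal :=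
  fold_right (fun x f => BAnd (BOr (BAtom (x, true)) (BAtom (x, false))) f) BTrue l.

Fixpoint bool_part (t : term) : bform literal :=
  match t with
  | Var n => BAtom (n, true)
  | Zero => BFalse
  | One => BTrue
  | Neg s => BNot (bool_part s)
  | Join s u => BOr (bool_part s) (bool_part u)
  | Meet s u => BAnd (bool_part s) (bool_part u)
  | J2t s => BAnd (bool_part s) (defined_form (bare_vars s))
  end.

Definition wk_is_half (a : wk) : bool :=
  match a with Whalf => true | _ => false end.

Definition wk_of_bool (b : bool) : wk := if b then W1 else W0.

Definition wk_lit (u : nat -> wk) (l : literal) : bool :=
  match u (fst l) with W1 => snd l | W0 => negb (snd l) | Whalf => false end.

Lemma eval_WKe_half u t x :
  In x (bare_vars t) -> u x = Whalf -> eval WKe u t = Whalf.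
Proof.
  intros Hx Hu; induction t; simpl in *; try contradiction.
  - destruct Hx as [<- | []]; exact Hu.
  - apply in_app_or in Hx; destruct Hx as [Hx | Hx].
    + rewrite (IHt1 Hx); reflexivity.
    + rewrite (IHt2 Hx); destruct (eval WKe u t1); reflexivity.
  - apply in_app_or in Hx; destruct Hx as [Hx | Hx].
    + rewrite (IHt1 Hx); reflexivity.
    + rewrite (IHt2 Hx); destruct (eval WKe u t1); reflexivity.
  - rewrite (IHt Hx); reflexivity.
Qed.

Lemma beval_defined_form u l :
  beval (wk_lit u) (defined_form l) = negb (existsb (fun x => wk_is_half (u x)) l).
Proof.
  induction l as [|x l IH]; simpl; [reflexivity|].
  rewrite IH; unfold wk_lit; simpl; destruct (u x); reflexivity.
Qed.

Lemma eval_WKe_classical u t :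
  (forall x, In x (bare_vars t) -> u x <> Whalf) ->
  eval WKe u t = wk_of_bool (beval (wk_lit u) (bool_part t)).
Proof.
  induction t; simpl; intro H.
  - specialize (H n (or_introl eq_refl)).
    unfold wk_lit; simpl; destruct (u n); [reflexivity | congruence | reflexivity].
  - rewrite IHt1, IHt2 by (intros; apply H, in_or_app; auto).
    destruct (beval (wk_lit u) (bool_part t1)), (beval (wk_lit u) (bool_part t2));
      reflexivity.
  - rewrite IHt1, IHt2 by (intros; apply H, in_or_app; auto).
    destruct (beval (wk_lit u) (bool_part t1)), (beval (wk_lit u) (bool_part t2));
      reflexivity.
  - rewrite IHt by exact H; destruct (beval (wk_lit u) (bool_part t)); reflexivity.
  - rewrite beval_defined_form.
    destruct (existsb (fun x => wk_is_half (u x)) (bare_vars t)) eqn:E.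
    + apply existsb_exists in E; destruct E as [x [Hx Hh]].
      rewrite (eval_WKe_half u t x Hx) by (destruct (u x); easy).
      destruct (beval (wk_lit u) (bool_part t)); reflexivity.
    + rewrite IHt.
      * destruct (beval (wk_lit u) (bool_part t)); reflexivity.
      * intros x Hx Hh; apply diff_true_false; rewrite <- E; symmetry.
        apply existsb_exists; exists x; rewrite Hh; auto.
  - reflexivity.
  - reflexivity.
Qed.

Lemma WKe_identity_bare_vars s t :
  holds WKe s t -> incl (bare_vars s) (bare_vars t).
Proof.
  intros Hst x Hx.
  destruct (in_dec Nat.eq_dec x (bare_vars t)) as [H | H]; [exact H | exfalso].
  set (u := fun y => if Nat.eqb y x then Whalf else W0).
  assert (Hux : u x = Whalf) by (unfold u; rewrite Nat.eqb_refl; reflexivity).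
  pose proof (Hst u) as E.
  rewrite (eval_WKe_half u s x Hx Hux), eval_WKe_classical in E.
  - destruct (beval (wk_lit u) (bool_part t)); discriminate.
  - intros y Hy; unfold u.
    destruct (Nat.eqb_spec y x); [subst; contradiction | discriminate].
Qed.

Definition wk_of_lits (w : literal -> bool) (x : nat) : wk :=
  if w (x, true) then W1 else if w (x, false) then W0 else Whalf.

Lemma wk_lit_of_lits w : consistent w -> forall l, wk_lit (wk_of_lits w) l = w l.
Proof.
  intros Hw [x s]; specialize (Hw x); unfold wk_lit, wk_of_lits; simpl.
  destruct (w (x, true)) eqn:E1, (w (x, false)) eqn:E2, s; simpl in *; congruence.
Qed.

Lemma WKe_identity_J2_part s t :
  holds WKe s t -> forall w, consistent w ->
  beval w (bool_part (J2t s)) = beval w (bool_part (J2t t)).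
Proof.
  intros Hst w Hw.
  set (u := wk_of_lits w).
  rewrite <- !(beval_ext _ (wk_lit u) w) by (intros; apply wk_lit_of_lits, Hw).
  assert (E : eval WKe u (J2t s) = eval WKe u (J2t t)) by (simpl; rewrite Hst; reflexivity).
  rewrite !(eval_WKe_classical u (J2t _)) in E by (intros ? []).
  destruct (beval (wk_lit u) (bool_part (J2t s))), (beval (wk_lit u) (bool_part (J2t t)));
    easy.
Qed.
(** * Models of (K1)-(K12) *)

Definition assign3 {T : Type} (a b c : T) (n : nat) : T :=
  match n with 0 => a | 1 => b | _ => c end.

Section KModel.

Variable A : algebra.
Hypothesis HA : models_K A.

Local Notation "x ⊓ y" := (a_meet A x y) (at level 40, left associativity).
Local Notation "x ⊔ y" := (a_join A x y) (at level 50, left associativity).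
Local Notation "¬ x" := (a_neg A x) (at level 35, right associativity).
Local Notation J := (a_J2 A).
Local Notation zero := (a_zero A).
Local Notation one := (a_one A).

Definition is_bool (b : A) : Prop := b ⊔ ¬ b = one.

Lemma joinxx x : x ⊔ x = x.
Proof. exact (HA (Join vx vx, vx) ltac:(cbn; tauto) (fun _ => x)). Qed.

Lemma joinC x y : x ⊔ y = y ⊔ x.
Proof. exact (HA (Join vx vy, Join vy vx) ltac:(cbn; tauto) (assign3 x y x)). Qed.

Lemma joinA x y z : x ⊔ (y ⊔ z) = x ⊔ y ⊔ z.
Proof.
  exact (HA (Join vx (Join vy vz), Join (Join vx vy) vz) ltac:(cbn; tauto) (assign3 x y z)).
Qed.

Lemma negK x : ¬ ¬ x = x.
Proof. exact (HA (Neg (Neg vx), vx) ltac:(cbn; tauto) (fun _ => x)). Qed.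

Lemma meetE x y : x ⊓ y = ¬ (¬ x ⊔ ¬ y).
Proof.
  exact (HA (Meet vx vy, Neg (Join (Neg vx) (Neg vy))) ltac:(cbn; tauto) (assign3 x y x)).
Qed.

Lemma meet_join_neg x y : x ⊓ (¬ x ⊔ y) = x ⊓ y.
Proof.
  exact (HA (Meet vx (Join (Neg vx) vy), Meet vx vy) ltac:(cbn; tauto) (assign3 x y x)).
Qed.

Lemma join0x x : zero ⊔ x = x.
Proof. exact (HA (Join Zero vx, vx) ltac:(cbn; tauto) (fun _ => x)). Qed.

Lemma one_neg0 : one = ¬ zero.
Proof. exact (HA (One, Neg Zero) ltac:(cbn; tauto) (fun _ => zero)). Qed.

Lemma bool_J2 x : is_bool (J x).
Proof. exact (HA (Join (J2t vx) (Neg (J2t vx)), One) ltac:(cbn; tauto) (fun _ => x)). Qed.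

Lemma join_J2 x y : x ⊔ J y = x ⊔ J (x ⊔ y).
Proof.
  exact (HA (Join vx (J2t vy), Join vx (J2t (Join vx vy))) ltac:(cbn; tauto)
            (assign3 x y x)).
Qed.

Lemma meet_J2 x : x ⊓ J x = x.
Proof. exact (HA (Meet vx (J2t vx), vx) ltac:(cbn; tauto) (fun _ => x)). Qed.

Lemma J2_meetN x : J (x ⊓ ¬ x) = zero.
Proof. exact (HA (J2t (Meet vx (Neg vx)), Zero) ltac:(cbn; tauto) (fun _ => x)). Qed.


Lemma neg_inj a b : ¬ a = ¬ b -> a = b.
Proof. intro H; rewrite <- (negK a), <- (negK b), H; reflexivity. Qed.

Lemma neg_join x y : ¬ (x ⊔ y) = ¬ x ⊓ ¬ y.
Proof. rewrite meetE, !negK; reflexivity. Qed.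

Lemma neg_meet x y : ¬ (x ⊓ y) = ¬ x ⊔ ¬ y.
Proof. rewrite meetE, negK; reflexivity. Qed.

Lemma meetC x y : x ⊓ y = y ⊓ x.
Proof. rewrite !meetE, joinC; reflexivity. Qed.

Lemma meetxx x : x ⊓ x = x.
Proof. rewrite meetE, joinxx, negK; reflexivity. Qed.

Lemma meetA x y z : x ⊓ (y ⊓ z) = x ⊓ y ⊓ z.
Proof. rewrite !meetE, !negK, joinA; reflexivity. Qed.

Lemma joinCA x y z : x ⊔ (y ⊔ z) = y ⊔ (x ⊔ z).
Proof. rewrite joinA, (joinC x y), <- joinA; reflexivity. Qed.

Lemma meetCA x y z : x ⊓ (y ⊓ z) = y ⊓ (x ⊓ z).
Proof. rewrite meetA, (meetC x y), <- meetA; reflexivity. Qed.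

Lemma meetACA a b c d : a ⊓ b ⊓ (c ⊓ d) = b ⊓ d ⊓ (a ⊓ c).
Proof. rewrite <- !meetA, (meetCA a b), (meetCA d a), (meetC d c); reflexivity. Qed.

Lemma joinACA a b c d : a ⊔ b ⊔ (c ⊔ d) = a ⊔ c ⊔ (b ⊔ d).
Proof. rewrite <- !joinA, (joinCA b c d); reflexivity. Qed.

Lemma joinx0 x : x ⊔ zero = x.
Proof. rewrite joinC; apply join0x. Qed.

Lemma neg1 : ¬ one = zero.
Proof. rewrite one_neg0, negK; reflexivity. Qed.

Lemma meet1x x : one ⊓ x = x.
Proof. rewrite meetE, neg1, join0x, negK; reflexivity. Qed.

Lemma meetx1 x : x ⊓ one = x.
Proof. rewrite meetC; apply meet1x. Qed.

Lemma join_meet_neg x y : x ⊔ (¬ x ⊓ y) = x ⊔ y.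
Proof.
  apply neg_inj; rewrite !neg_join, neg_meet, negK.
  rewrite <- (negK x) at 2; rewrite meet_join_neg; reflexivity.
Qed.

Lemma join_neg_meet x y : ¬ x ⊔ x ⊓ y = ¬ x ⊔ y.
Proof. rewrite <- (join_meet_neg (¬ x) y), negK; reflexivity. Qed.

Lemma joinxN x : x ⊔ ¬ x = x ⊔ one.
Proof. rewrite <- (meetx1 (¬ x)) at 1; rewrite join_meet_neg; reflexivity. Qed.

Lemma meetxN x : x ⊓ ¬ x = x ⊓ zero.
Proof. rewrite <- (joinx0 (¬ x)) at 1; rewrite meet_join_neg; reflexivity. Qed.

Lemma meet_eq_of_negjoin1 x y : ¬ x ⊔ y = one -> x ⊓ y = x.
Proof. intro H; rewrite <- meet_join_neg, H; apply meetx1. Qed.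

Lemma bool_join1 b : is_bool b -> b ⊔ one = one.
Proof. intro H; rewrite <- joinxN; exact H. Qed.

Lemma bool_meet0 b : is_bool b -> b ⊓ zero = zero.
Proof.
  unfold is_bool; intro H; rewrite <- meetxN, meetE, negK, joinC, H, neg1; reflexivity.
Qed.

Lemma bool_meetN b : is_bool b -> b ⊓ ¬ b = zero.
Proof. intro H; rewrite meetxN; apply bool_meet0, H. Qed.

Lemma bool0 : is_bool zero.
Proof. unfold is_bool; rewrite join0x, one_neg0; reflexivity. Qed.

Lemma bool1 : is_bool one.
Proof. unfold is_bool; rewrite neg1, joinx0; reflexivity. Qed.

Lemma boolN b : is_bool b -> is_bool (¬ b).
Proof. unfold is_bool; intro H; rewrite negK, joinC; exact H. Qed.

Lemma boolJ b c : is_bool b -> is_bool c -> is_bool (b ⊔ c).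
Proof.
  intros Hb Hc; unfold is_bool.
  rewrite joinxN, <- joinA, (bool_join1 c Hc), (bool_join1 b Hb); reflexivity.
Qed.

Lemma boolM b c : is_bool b -> is_bool c -> is_bool (b ⊓ c).
Proof. intros Hb Hc; rewrite meetE; apply boolN, boolJ; apply boolN; assumption. Qed.


(* [fib0 x] and [fib1 x] are the least and the greatest element of the
   Boolean fibre containing x: models of (K1)-(K8) are Płonka sums of
   Boolean algebras. *)
Definition fib0 (x : A) : A := x ⊓ zero.
Definition fib1 (x : A) : A := x ⊔ one.

Lemma join_fib0 x : x ⊔ fib0 x = x.
Proof. unfold fib0; rewrite <- meetxN, meetC, join_meet_neg, joinxx; reflexivity. Qed.

Lemma fib0N x : fib0 (¬ x) = fib0 x.
Proof. unfold fib0; rewrite <- !meetxN, negK, meetC; reflexivity. Qed.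

Lemma fib0_idem x : fib0 (fib0 x) = fib0 x.
Proof. unfold fib0; rewrite <- meetA, meetxx; reflexivity. Qed.

Lemma fib0_meet x y : fib0 x ⊓ y = fib0 x ⊓ fib0 y.
Proof. unfold fib0; rewrite <- !meetA, (meetCA zero y zero), meetxx, (meetC zero y); reflexivity. Qed.

Lemma fib0_meetx x : fib0 x ⊓ x = fib0 x.
Proof. unfold fib0; rewrite <- meetA, (meetC zero x), meetA, meetxx; reflexivity. Qed.

Lemma neg_fib0 x : ¬ fib0 x = fib1 (¬ x).
Proof. unfold fib0, fib1; rewrite neg_meet, <- one_neg0; reflexivity. Qed.

Lemma fib1N x : fib1 (¬ x) = fib1 x.
Proof. rewrite <- neg_fib0, <- (fib0N x), neg_fib0, negK; reflexivity. Qed.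

Lemma fib0_join x y : fib0 (x ⊔ y) = fib0 x ⊓ y.
Proof.
  unfold fib0 at 1; rewrite <- meetxN, neg_join.
  rewrite (meetC (¬ x) (¬ y)), meetA, (meetC (x ⊔ y) (¬ y)), <- meetA, (meetC (x ⊔ y)).
  rewrite <- (negK x) at 2; rewrite meet_join_neg.
  rewrite meetCA, (meetC (¬ y) y), meetxN; fold (fib0 y).
  rewrite <- (fib0N x); unfold fib0; rewrite <- meetA, (meetC zero y); reflexivity.
Qed.

Lemma join_fib0s x y : fib0 x ⊔ fib0 y = fib0 (x ⊔ y).
Proof.
  set (w := fib0 (x ⊔ y)).
  assert (Hw : ¬ fib0 x ⊓ fib0 y = w).
  { unfold w; rewrite fib0_join.
    change (¬ fib0 x ⊓ (y ⊓ zero) = fib0 x ⊓ y).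
    rewrite (meetC y zero), meetA.
    change (fib0 (¬ fib0 x) ⊓ y = fib0 x ⊓ y).
    rewrite fib0N, fib0_idem; reflexivity. }
  rewrite <- join_meet_neg, Hw.
  assert (Hw2 : ¬ w ⊓ fib0 x = w).
  { change (¬ w ⊓ (x ⊓ zero) = w); rewrite (meetC x zero), meetA.
    change (fib0 (¬ w) ⊓ x = w); rewrite fib0N.
    unfold w; rewrite fib0_idem, fib0_join, <- meetA, (meetC y x), meetA, fib0_meetx.
    reflexivity. }
  rewrite joinC, <- join_meet_neg, Hw2, joinxx; reflexivity.
Qed.

Lemma J2_fib0 x : J (fib0 x) = zero.
Proof. unfold fib0; rewrite <- meetxN; apply J2_meetN. Qed.

Lemma J2_1 : J one = one.
Proof. pose proof (meet_J2 one) as H; rewrite meet1x in H; exact H. Qed.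

Lemma join_J2x x : x ⊔ J x = x.
Proof.
  pose proof (join_J2 x (fib0 x)) as H.
  rewrite J2_fib0, join_fib0, joinx0 in H; symmetry; exact H.
Qed.

Lemma J2_join_fib0 x : J x ⊔ fib0 x = x.
Proof.
  assert (H : ¬ J x ⊓ x = fib0 x).
  { rewrite meetC, <- (meet_J2 x) at 1.
    rewrite <- meetA, (bool_meetN _ (bool_J2 x)); reflexivity. }
  rewrite <- H, join_meet_neg, joinC; apply join_J2x.
Qed.


Lemma meet_J2_meet b x : b ⊓ J x = b ⊓ J (x ⊓ b).
Proof.
  rewrite <- (meet_join_neg b (J x)), <- (meet_join_neg b (J (x ⊓ b))).
  rewrite (join_J2 (¬ b) x), (join_J2 (¬ b) (x ⊓ b)), (meetC x b).
  rewrite join_neg_meet; reflexivity.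
Qed.

Lemma meet_J2N x : x ⊓ J (¬ x) = fib0 x.
Proof.
  assert (H : x ⊓ ¬ J (¬ x) = x).
  { pose proof (join_J2x (¬ x)) as H; apply (f_equal (a_neg A)) in H.
    rewrite neg_join, !negK in H; exact H. }
  rewrite <- H at 1; rewrite <- meetA, (meetC (¬ _)), (bool_meetN _ (bool_J2 _)); reflexivity.
Qed.

Lemma J2_meet_J2N x : J x ⊓ J (¬ x) = zero.
Proof. rewrite meetC, meet_J2_meet, meet_J2N, J2_fib0; apply bool_meet0, bool_J2. Qed.

Lemma neg_join_fib0 x a : ¬ (x ⊔ fib0 a) = ¬ x ⊔ fib0 a.
Proof.
  set (e := x ⊔ fib0 a); set (w := fib0 (x ⊔ a)).
  assert (H1 : fib0 (¬ e) = w).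
  { unfold w, e; rewrite fib0N, !fib0_join; symmetry; apply fib0_meet. }
  assert (H2 : ¬ e = ¬ w ⊓ ¬ x).
  { unfold w, e; rewrite <- join_fib0s, !neg_join.
    rewrite (meetC (_ ⊓ _) (¬ x)), meetA, <- (neg_join x (fib0 x)), join_fib0; reflexivity. }
  assert (H3 : w ⊔ ¬ e = w ⊔ ¬ x) by (rewrite H2; apply join_meet_neg).
  rewrite <- (J2_join_fib0 (¬ e)), H1, joinC, join_J2, H3, <- join_J2.
  unfold w; rewrite <- join_fib0s, <- (fib0N x), (joinC _ (J (¬ x))), joinA, J2_join_fib0.
  reflexivity.
Qed.

Lemma meet_fib1 x a : x ⊓ fib1 a = x ⊔ fib0 a.
Proof.
  pose proof (neg_join_fib0 (¬ x) a) as H.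
  rewrite neg_join, negK, neg_fib0, fib1N in H; exact H.
Qed.

Lemma join_meet_fib0 x y : x ⊔ x ⊓ y = x ⊔ fib0 y.
Proof.
  rewrite <- join_meet_neg, meetA, (meetC (¬ x) x), meetxN; fold (fib0 x).
  rewrite <- fib0_join, <- join_fib0s, joinA, join_fib0; reflexivity.
Qed.

Lemma join_meet_bool b c : is_bool c -> b ⊔ b ⊓ c = b.
Proof. intro Hc; rewrite join_meet_fib0; unfold fib0; rewrite (bool_meet0 c Hc); apply joinx0. Qed.

Lemma meet_join_bool b c : is_bool c -> b ⊓ (b ⊔ c) = b.
Proof. intro Hc; apply neg_inj; rewrite neg_meet, neg_join; apply join_meet_bool, boolN, Hc. Qed.

Lemma meet_eq_of_meetN0 u w : u ⊓ ¬ w = zero -> u ⊓ w = u.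
Proof. intro H; apply meet_eq_of_negjoin1; rewrite <- (negK w), <- neg_meet, H, one_neg0; reflexivity. Qed.

Lemma join_eq_of_meet_eq u w : is_bool u -> u ⊓ w = u -> u ⊔ w = w.
Proof. intros Hu H; rewrite <- H at 1; rewrite joinC, meetC; apply join_meet_bool, Hu. Qed.


Lemma bool_meet_joinr b c d : is_bool b -> is_bool c -> is_bool d ->
  b ⊓ (c ⊔ d) = b ⊓ c ⊔ b ⊓ d.
Proof.
  intros Hb Hc Hd.
  set (l := b ⊓ (c ⊔ d)); set (r := b ⊓ c ⊔ b ⊓ d).
  assert (Bl : is_bool l) by (apply boolM; [|apply boolJ]; assumption).
  assert (H1 : b ⊓ ¬ r = ¬ c ⊓ (b ⊓ ¬ d)).
  { unfold r; rewrite neg_join, !neg_meet, meetA, meet_join_neg, (meetC b (¬ c)), <- meetA.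
    rewrite meet_join_neg; reflexivity. }
  assert (H2 : l ⊓ ¬ r = zero).
  { unfold l; rewrite <- meetA, meetCA, H1, (meetCA (¬ c)), <- neg_join, meetCA.
    rewrite (bool_meetN _ (boolJ _ _ Hc Hd)); apply bool_meet0; assumption. }
  assert (Hlr : l ⊓ r = l) by (apply meet_eq_of_meetN0; exact H2).
  assert (Hcl : b ⊓ c ⊓ l = b ⊓ c).
  { unfold l; rewrite <- meetA, (meetCA c b), meetA, meetxx, meet_join_bool by assumption.
    reflexivity. }
  assert (Hdl : b ⊓ d ⊓ l = b ⊓ d).
  { unfold l; rewrite <- meetA, (meetCA d b), meetA, meetxx, (joinC c d), meet_join_bool
      by assumption.
    reflexivity. }
  assert (Hrl : r ⊔ l = l).
  { unfold r; rewrite <- joinA, (join_eq_of_meet_eq _ _ (boolM _ _ Hb Hd) Hdl).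
    rewrite (join_eq_of_meet_eq _ _ (boolM _ _ Hb Hc) Hcl); reflexivity. }
  rewrite <- Hlr, meetC, <- Hrl at 1; apply meet_join_bool, Bl.
Qed.

Lemma J2_meet_bool x b : is_bool b -> J (x ⊓ b) = J x ⊓ b.
Proof.
  intro Hb.
  assert (H : ¬ b ⊓ J (x ⊓ b) = zero).
  { rewrite meet_J2_meet, <- meetA, (bool_meetN _ Hb); fold (fib0 x).
    rewrite J2_fib0; apply bool_meet0, boolN, Hb. }
  assert (H' : J (x ⊓ b) ⊓ b = J (x ⊓ b)).
  { apply meet_eq_of_meetN0; rewrite meetC; exact H. }
  rewrite <- H', meetC, <- meet_J2_meet; apply meetC.
Qed.

(* In WK^e, [defined a] is 1 when a is 0 or 1, and 0 when a is 1/2. *)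
Definition defined (x : A) : A := J (fib1 x).

Lemma bool_defined x : is_bool (defined x).
Proof. apply bool_J2. Qed.

Lemma defined0 : defined zero = one.
Proof. unfold defined, fib1; rewrite join0x; apply J2_1. Qed.

Lemma definedN x : defined (¬ x) = defined x.
Proof. unfold defined; rewrite fib1N; reflexivity. Qed.

Lemma J2_join_fib0_bool b x : is_bool b -> J (b ⊔ fib0 x) = b ⊓ defined x.
Proof. intro Hb; rewrite <- meet_fib1, meetC, J2_meet_bool by exact Hb; apply meetC. Qed.

Lemma join_fib0_defined b x : is_bool b -> b ⊔ fib0 x = b ⊓ defined x ⊔ fib0 x.
Proof.
  intro Hb; rewrite <- !meet_fib1, <- meetA; unfold defined.
  rewrite (meetC (J _)), meet_J2; reflexivity.
Qed.

Lemma fib1_join_fib0 x : fib1 x = one ⊔ fib0 x.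
Proof. rewrite <- meet_fib1; symmetry; apply meet1x. Qed.

Lemma fib1_join x y : fib1 (x ⊔ y) = fib1 x ⊓ fib1 y.
Proof.
  rewrite meet_fib1; unfold fib1 at 2; rewrite <- joinA, <- fib1_join_fib0.
  unfold fib1; symmetry; apply joinA.
Qed.

Lemma J2_le_defined x : J x = defined x ⊓ J x.
Proof.
  assert (H : fib1 x ⊓ J x = x) by (rewrite meetC, meet_fib1; apply J2_join_fib0).
  rewrite <- H at 1; apply J2_meet_bool, bool_J2.
Qed.

Lemma defined_join x y : defined (x ⊔ y) = defined x ⊓ defined y.
Proof.
  assert (H3 : fib1 (x ⊔ y) = defined x ⊓ defined y ⊔ fib0 (x ⊔ y)).
  { rewrite <- meet_fib1, fib1_join; unfold defined.
    transitivity (fib1 x ⊓ J (fib1 x) ⊓ (fib1 y ⊓ J (fib1 y))).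
    { rewrite !meet_J2; reflexivity. }
    apply meetACA. }
  assert (H4 : defined (x ⊔ y) = defined x ⊓ defined y ⊓ defined (x ⊔ y)).
  { unfold defined at 1; rewrite H3, J2_join_fib0_bool; [reflexivity|].
    apply boolM; apply bool_defined. }
  assert (H5 : defined y ⊓ defined x = defined (x ⊔ y) ⊓ defined x).
  { pose proof (join_J2 (fib0 x) (fib1 y)) as H.
    assert (E : fib0 x ⊔ fib1 y = fib1 (x ⊔ y)).
    { rewrite fib1_join_fib0, joinCA, join_fib0s, <- fib1_join_fib0; reflexivity. }
    rewrite E in H; apply (f_equal J) in H; fold (defined y) (defined (x ⊔ y)) in H.
    rewrite !(joinC (fib0 x)), !J2_join_fib0_bool in H by apply bool_defined.
    exact H. }
  rewrite H4, (meetC (defined x) (defined y)), <- meetA, (meetC (defined x) (defined (x ⊔ y))).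
  rewrite <- H5, meetA, meetxx; reflexivity.
Qed.


Lemma defined_J2 x : defined x = J x ⊔ J (¬ x).
Proof.
  set (p := J x); set (q := J (¬ x)).
  assert (Bp : is_bool p) by apply bool_J2.
  assert (Bq : is_bool q) by apply bool_J2.
  assert (H1 : defined x = (p ⊔ q) ⊓ defined x).
  { assert (E : fib1 x = p ⊔ q ⊔ fib0 x).
    { unfold fib1; rewrite <- joinxN.
      rewrite <- (J2_join_fib0 x) at 1; rewrite <- (J2_join_fib0 (¬ x)), fib0N.
      unfold p, q; rewrite <- !joinA, (joinCA (fib0 x)), joinxx; reflexivity. }
    unfold defined at 1; rewrite E, J2_join_fib0_bool by (apply boolJ; assumption).
    reflexivity. }
  assert (H2 : p = defined x ⊓ p) by apply J2_le_defined.
  assert (H3 : q = defined x ⊓ q) by (unfold q; rewrite <- (definedN x); apply J2_le_defined).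
  rewrite H1 at 1; rewrite meetC, (bool_meet_joinr _ _ _ (bool_defined x) Bp Bq), <- H2, <- H3.
  reflexivity.
Qed.

Section BoolInterpretation.

Context {X : Type}.
Hypothesis X_eq_dec : forall a b : X, {a = b} + {a <> b}.

Fixpoint bint (sg : X -> A) (f : bform X) : A :=
  match f with
  | BAtom a => sg a
  | BTrue => one
  | BFalse => zero
  | BNot f => ¬ bint sg f
  | BAnd f g => bint sg f ⊓ bint sg g
  | BOr f g => bint sg f ⊔ bint sg g
  end.

Definition bconst (b : bool) : A := if b then one else zero.

Lemma bool_bconst c : is_bool (bconst c).
Proof. destruct c; [apply bool1 | apply bool0]. Qed.

Lemma bool_bint sg f : (forall a, is_bool (sg a)) -> is_bool (bint sg f).
Proof.
  intro H; induction f; simpl.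
  - apply H.
  - apply bool1.
  - apply bool0.
  - apply boolN; assumption.
  - apply boolM; assumption.
  - apply boolJ; assumption.
Qed.

Lemma bint_const w f : bint (fun a => bconst (w a)) f = bconst (beval w f).
Proof.
  induction f; simpl; try reflexivity.
  - rewrite IHf; destruct (beval w f); simpl; [apply neg1 | symmetry; apply one_neg0].
  - rewrite IHf1, IHf2; destruct (beval w f1), (beval w f2); simpl;
      first [apply meetxx | apply meet1x | apply meetx1].
  - rewrite IHf1, IHf2; destruct (beval w f1), (beval w f2); simpl;
      first [apply joinxx | apply join0x | apply joinx0].
Qed.

Lemma bint_ext sg sg' f :
  (forall a, In a (batoms f) -> sg a = sg' a) -> bint sg f = bint sg' f.
Proof.
  induction f; simpl; intro H; try reflexivity.
  - apply H; left; reflexivity.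
  - rewrite IHf by exact H; reflexivity.
  - rewrite IHf1, IHf2 by (intros; apply H, in_or_app; auto); reflexivity.
  - rewrite IHf1, IHf2 by (intros; apply H, in_or_app; auto); reflexivity.
Qed.

Lemma meet_bint_local e sg sg' f :
  is_bool e -> (forall a, is_bool (sg a)) -> (forall a, is_bool (sg' a)) ->
  (forall a, e ⊓ sg a = e ⊓ sg' a) -> e ⊓ bint sg f = e ⊓ bint sg' f.
Proof.
  intros He Hsg Hsg' H.
  assert (Emeet : forall x y, e ⊓ (x ⊓ y) = e ⊓ x ⊓ (e ⊓ y)).
  { intros x y; rewrite <- meetA, (meetCA x e y), (meetA e e), meetxx; reflexivity. }
  assert (Eneg : forall x, e ⊓ ¬ (e ⊓ x) = e ⊓ ¬ x).
  { intro x; rewrite neg_meet; apply meet_join_neg. }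
  induction f; simpl; try reflexivity.
  - apply H.
  - rewrite <- Eneg, IHf, Eneg; reflexivity.
  - rewrite !Emeet, IHf1, IHf2; reflexivity.
  - rewrite !bool_meet_joinr by (assumption || apply bool_bint; assumption).
    rewrite IHf1, IHf2; reflexivity.
Qed.

Lemma bool_split p x : is_bool p -> is_bool x -> x = p ⊓ x ⊔ ¬ p ⊓ x.
Proof.
  intros Hp Hx; rewrite !(meetC _ x), <- bool_meet_joinr by auto using boolN.
  rewrite Hp; symmetry; apply meetx1.
Qed.

Definition upd {Y : Type} (g : X -> Y) (a : X) (c : Y) (b : X) : Y :=
  if X_eq_dec b a then c else g b.

Lemma bint_taut_local f : (forall w, beval w f = true) ->
  forall L sg w0, (forall a, is_bool (sg a)) ->
  (forall a, In a (batoms f) -> ~ In a L -> sg a = bconst (w0 a)) ->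
  bint sg f = one.
Proof.
  intros Hf L; induction L as [|a L IH]; intros sg w0 Hsg Hout.
  - rewrite (bint_ext sg (fun b => bconst (w0 b))) by (intros b Hb; apply Hout; auto).
    rewrite bint_const, Hf; reflexivity.
  - assert (Hupd : forall c, forall b, is_bool (upd sg a (bconst c) b)).
    { intros c b; unfold upd; destruct (X_eq_dec b a); [apply bool_bconst | apply Hsg]. }
    assert (Hstep : forall e c, is_bool e -> e ⊓ sg a = e ⊓ bconst c -> e ⊓ bint sg f = e).
    { intros e c He Hc.
      rewrite (meet_bint_local e sg (upd sg a (bconst c))); auto.
      - rewrite (IH _ (upd w0 a c)); [apply meetx1 | apply Hupd |].
        intros b Hb HL; unfold upd; destruct (X_eq_dec b a) as [_ | Hne]; [reflexivity|].
        apply Hout; [exact Hb | intros [E | E]; auto].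
      - intro b; unfold upd; destruct (X_eq_dec b a) as [-> | _]; auto. }
    assert (Hpos : sg a ⊓ bint sg f = sg a).
    { apply (Hstep _ true (Hsg a)); rewrite meetxx; symmetry; apply meetx1. }
    assert (Hneg : ¬ sg a ⊓ bint sg f = ¬ sg a).
    { apply (Hstep _ false (boolN _ (Hsg a))); simpl.
      rewrite meetC, (bool_meetN _ (Hsg a)); symmetry; apply bool_meet0, boolN, Hsg. }
    rewrite (bool_split (sg a) (bint sg f)), Hpos, Hneg by auto using bool_bint.
    apply Hsg.
Qed.

Lemma bint_taut sg f :
  (forall a, is_bool (sg a)) -> (forall w, beval w f = true) -> bint sg f = one.
Proof.
  intros Hsg Hf; apply (bint_taut_local f Hf (batoms f) sg (fun _ => true) Hsg).
  intros a Ha Hn; contradiction.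
Qed.

End BoolInterpretation.

Lemma bint_clash sg l :
  (forall x, sg (x, true) ⊓ sg (x, false) = zero) -> bint sg (clash l) = zero.
Proof.
  intro H; induction l as [|x l IH]; simpl; [reflexivity|].
  rewrite IH, H; apply joinxx.
Qed.

Lemma bint_eq_of_consistent_equiv sg f g :
  (forall a, is_bool (sg a)) -> (forall x, sg (x, true) ⊓ sg (x, false) = zero) ->
  (forall w, consistent w -> beval w f = beval w g) -> bint sg f = bint sg g.
Proof.
  intros Hsg Hclash.
  assert (Hle : forall f g, (forall w, consistent w -> beval w f = beval w g) ->
    bint sg f ⊓ bint sg g = bint sg f).
  { intros f' g' Hfg; apply meet_eq_of_negjoin1.
    pose proof (bint_taut literal_eq_dec sg _ Hsg (consistent_equiv_taut f' g' Hfg)) as H.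
    simpl in H; rewrite bint_clash, joinx0 in H by exact Hclash; exact H. }
  intro Hfg; rewrite <- (Hle f g Hfg), meetC, Hle; [reflexivity|].
  intros w Hw; symmetry; apply Hfg, Hw.
Qed.

Definition lit (v : nat -> A) (l : literal) : A :=
  if snd l then J (v (fst l)) else J (¬ v (fst l)).

Lemma bool_lit v l : is_bool (lit v l).
Proof. unfold lit; destruct (snd l); apply bool_J2. Qed.

Definition joins (v : nat -> A) (l : list nat) : A :=
  fold_right (fun x y => v x ⊔ y) zero l.

Lemma joins_app v l1 l2 : joins v (l1 ++ l2) = joins v l1 ⊔ joins v l2.
Proof.
  induction l1 as [|x l1 IH]; simpl; [symmetry; apply join0x|].
  rewrite IH; apply joinA.
Qed.

Lemma join_joins_incl v l1 l2 : incl l1 l2 -> joins v l1 ⊔ joins v l2 = joins v l2.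
Proof.
  induction l1 as [|x l1 IH]; simpl; intro H; [apply join0x|].
  apply incl_cons_inv in H; destruct H as [Hx H].
  rewrite <- joinA, IH by exact H; clear IH H.
  induction l2 as [|y l2 IH]; simpl in *; [contradiction|].
  destruct Hx as [<- | Hx]; [rewrite joinA, joinxx | rewrite joinCA, IH]; auto.
Qed.

Lemma joins_eq v l1 l2 : incl l1 l2 -> incl l2 l1 -> joins v l1 = joins v l2.
Proof.
  intros H1 H2; rewrite <- (join_joins_incl v l2 l1 H2), joinC.
  apply join_joins_incl, H1.
Qed.

Lemma defined_joins v l : defined (joins v l) = bint (lit v) (defined_form l).
Proof.
  induction l as [|x l IH]; simpl; [apply defined0|].
  rewrite defined_join, IH, defined_J2; reflexivity.
Qed.

Lemma eval_normal_form v t :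
  eval A v t = bint (lit v) (bool_part t) ⊔ fib0 (joins v (bare_vars t)).
Proof.
  assert (Hfib0 : fib0 zero = zero) by apply meetxx.
  induction t; simpl.
  - rewrite joinx0; symmetry; apply J2_join_fib0.
  - rewrite meetE, IHt1, IHt2, !neg_join_fib0, joinACA, joins_app, join_fib0s.
    rewrite <- neg_meet, <- neg_join_fib0, negK; reflexivity.
  - rewrite IHt1, IHt2, joinACA, joins_app, join_fib0s; reflexivity.
  - rewrite IHt, neg_join_fib0; reflexivity.
  - rewrite IHt, J2_join_fib0_bool by (apply bool_bint, bool_lit).
    rewrite Hfib0, joinx0, defined_joins; reflexivity.
  - rewrite Hfib0; symmetry; apply joinxx.
  - rewrite Hfib0; symmetry; apply joinx0.
Qed.

Lemma eval_J2_normal_form v t :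
  eval A v t = bint (lit v) (bool_part (J2t t)) ⊔ fib0 (joins v (bare_vars t)).
Proof.
  rewrite eval_normal_form, join_fib0_defined by (apply bool_bint, bool_lit).
  rewrite defined_joins; reflexivity.
Qed.

Theorem K_model_satisfies_WKe_identity s t : holds WKe s t -> holds A s t.
Proof.
  intros Hst v.
  assert (Hvars : joins v (bare_vars s) = joins v (bare_vars t)).
  { apply joins_eq; apply WKe_identity_bare_vars; [exact Hst|].
    intro; symmetry; apply Hst. }
  assert (Hbool : bint (lit v) (bool_part (J2t s)) = bint (lit v) (bool_part (J2t t))).
  { apply bint_eq_of_consistent_equiv.
    - apply bool_lit.
    - intro x; apply J2_meet_J2N.
    - apply WKe_identity_J2_part, Hst. }
  rewrite !eval_J2_normal_form, Hbool, Hvars; reflexivity.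
Qed.

End KModel.

Lemma WKe_models_K : models_K WKe.
Proof.
  intros e He; cbn in He.
  repeat (destruct He as [<- | He];
    [intro v; cbn; destruct (v 0), (v 1), (v 2); reflexivity |]).
  contradiction.
Qed.

Theorem theorem4p5 :
  forall A : algebra, models_K A <-> in_variety_WKe A.
Proof.
  intro A; split.
  - intros HA s t; apply K_model_satisfies_WKe_identity, HA.
  - intros HV e He; apply HV, WKe_models_K, He.
Qed.
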